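(* Let $1<S\le N$, $L$ a band-width vector, $\dot W$ an $L$-admissible matrix, $W_\varepsilon=\mathrm{Id}+\varepsilon\dot W$, $k\in\mathbb N$, $\beta\in\Gamma$, and $P_{\varepsilon,\beta}=D_{k,\beta,L}W_\varepsilon$. Let $\gamma>0$ be such that $P_{\varepsilon,\beta}$ has $N$ distinct eigenvalues for $0<\varepsilon<\gamma$, and for such $\varepsilon$ let $f^{(1)}_\varepsilon,\dots,f^{(N)}_\varepsilon$ be a unit-norm eigenbasis with eigenvalues $\lambda^{(\ell)}_\varepsilon$, labelled so that $\lambda^{(\ell)}_\varepsilon\to e^{-2\pi ik\beta_s}$ as $\varepsilon\to0$ whenever $\ell\in B_s$. Then for every $1\le\ell\ne m\le N$, $\lim_{\varepsilon\to0}\langle f^{(\ell)}_\varepsilon,f^{(m)}_\varepsilon\rangle=0$.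
   Context: A band-width vector is $L=(L_1,\dots,L_S)$ of positive integers with $\sum_sL_s=N$; $N_0=0$, $N_s=N_{s-1}+L_s$, $B_s=\{j:N_{s-1}<j\le N_s\}$. $D_{k,\beta,L}$ is the diagonal matrix with $j$-th entry $e^{-2\pi ik\beta_s}$ for $j\in B_s$. $\dot W$ is $L$-admissible if it is real symmetric and (1) $\dot W_{ij}\ge0$ for $i\ne j$, $\sum_j\dot W_{ij}=0$ for all $i$; (2) $\dot W$ has $N$ distinct eigenvalues; (3) each $\hat W_s=(\dot W_{jk})_{j,k\in B_s}$ has $L_s$ distinct eigenvalues. $\Gamma=\{\beta\in\mathbb R^S: e^{-2\pi ik\beta_{s_1}}\neq e^{-2\pi ik\beta_{s_2}}\text{ for all }k\ne0,\ s_1\ne s_2\}$. $\langle v,w\rangle=\sum_jv_j\overline{w_j}$. *)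

From HB Require Import structures.
From mathcomp Require Import all_boot all_order all_algebra.
From mathcomp Require Import all_classical all_reals all_analysis.
From mathcomp Require Import complex.
Set Implicit Arguments. Unset Strict Implicit. Unset Printing Implicit Defensive.
Import Order.TTheory GRing.Theory Num.Theory.
Import numFieldNormedType.Exports.
Local Open Scope ring_scope.
Local Open Scope complex_scope.

Section Defs.
Variable R : realType.

Definition expi (x : R) : R[i] := cos x +i* sin x.

(* start offset N_{s-1} of block s (0-indexed: sum of L_t for t < s) *)
Definition Nstart (S : nat) (L : 'I_S -> nat) (s : 'I_S) : nat :=
  (\sum_(t < S | (t < s)%N) L t)%N.

Definition inB (S : nat) (L : 'I_S -> nat) (s : 'I_S) (j : nat) : bool :=
  (Nstart L s <= j < Nstart L s + L s)%N.

Definition bandwidth (S N : nat) (L : 'I_S -> nat) : Prop :=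
  (forall s, (0 < L s)%N) /\ (\sum_(s < S) L s)%N = N.

(* access a square matrix with nat indices (0 outside the range) *)
Definition natmx (F : pzRingType) (N : nat) (A : 'M[F]_N) (i j : nat) : F :=
  match @insub _ (fun k => k < N)%N 'I_N i, @insub _ (fun k => k < N)%N 'I_N j with
  | Some i', Some j' => A i' j'
  | _, _ => 0
  end.

Definition blockmx (S N : nat) (L : 'I_S -> nat) (A : 'M[R]_N) (s : 'I_S)
  : 'M[R]_(L s) :=
  \matrix_(i < L s, j < L s) natmx A (Nstart L s + i) (Nstart L s + j).

Definition distinct_eigs (F : fieldType) (n : nat) (A : 'M[F]_n) : Prop :=
  exists e : 'I_n -> F, injective e /\ forall i, eigenvalue A (e i).

Definition admissible (S N : nat) (L : 'I_S -> nat) (Wd : 'M[R]_N) : Prop :=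
  [/\ Wd^T = Wd,
      (forall i j : 'I_N, i != j -> 0 <= Wd i j),
      (forall i : 'I_N, \sum_(j < N) Wd i j = 0),
      distinct_eigs Wd &
      (forall s : 'I_S, distinct_eigs (blockmx L Wd s))].

Definition Gamma (S : nat) (beta : 'I_S -> R) : Prop :=
  forall (k : int), k != 0 -> forall s1 s2 : 'I_S, s1 != s2 ->
    expi (- 2 * pi * k%:~R * beta s1) != expi (- 2 * pi * k%:~R * beta s2).

Definition Dmx (S N : nat) (L : 'I_S -> nat) (k : nat) (beta : 'I_S -> R)
  : 'M[R[i]]_N :=
  diag_mx (\row_(j < N) \sum_(s < S | inB L s j) expi (- 2 * pi * k%:R * beta s)).

Definition Weps (N : nat) (Wd : 'M[R]_N) (eps : R) : 'M[R[i]]_N :=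
  1%:M + (eps%:C) *: map_mx (fun x : R => x%:C) Wd.

Definition Pmx (S N : nat) (L : 'I_S -> nat) (k : nat) (beta : 'I_S -> R)
  (Wd : 'M[R]_N) (eps : R) : 'M[R[i]]_N :=
  Dmx N L k beta *m Weps Wd eps.

Definition cdot (N : nat) (v w : 'cV[R[i]]_N) : R[i] :=
  \sum_(j < N) v j 0 * (w j 0)^*.

End Defs.

(* topology on R[i]: the metric topology of its norm (as for any numFieldType) *)
HB.instance Definition _ (R : realType) := PseudoPointedMetric.copy R[i] (R[i])^o.

(* As eps -> 0 the eigenvalue lambda_l tends to the phase c_s = e^{-2 pi i k beta_s} of the
   block s containing l.  If k = 0 then P_eps = W_eps is real symmetric and its eigenvectors
   are exactly orthogonal.  Otherwise beta in Gamma makes the phases of distinct blocks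
   distinct, and the eigenvalue equation c_{s(i)} (W_eps f_l)_i = lambda_l f_l(i) shows that
   f_l is O(eps) outside its own block; this settles eigenvectors in different blocks.
   For l <> m in the same block s, expand the block parts of f_l and f_m in a real
   orthonormal eigenbasis of the symmetric block hat W_s, with coordinates alpha_j, beta_j and
   eigenvalues theta_j.  The block equation gives (theta_j - a_eps) alpha_j = O(eps) for a
   scalar a_eps, hence alpha_j alpha_j' = O(eps) for j <> j' since theta_j <> theta_j'.
   Since D and W_eps are symmetric, the bilinear form f_l^T W_eps f_m vanishes, which forces
   sum_j alpha_j beta_j = O(eps).  Finally |sum_j alpha_j conj(beta_j)|^2 differs from
   |sum_j alpha_j beta_j|^2 only by terms containing alpha_j conj(alpha_j') with j <> j', so
   <f_l, f_m> = O(sqrt eps). *)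

From HB Require Import structures.
From mathcomp Require Import all_boot all_order all_algebra.
From mathcomp Require Import all_classical all_reals all_analysis.
From mathcomp Require Import complex.
From mathcomp Require Import lra ring zify.
Import Order.TTheory GRing.Theory Num.Theory.
Import numFieldNormedType.Exports.
Local Open Scope ring_scope.
Local Open Scope classical_set_scope.
Local Open Scope complex_scope.

Section EpsAsymptotics.
Context {R : realType}.
Local Notation C := R[i].

Definition bigO_eps (h : R -> C) :=
  exists K : R, \forall e \near (0 : R)^'+, `|h e| <= (K * e)%:C.

Definition bounded_eps (h : R -> C) :=
  exists K : R, \forall e \near (0 : R)^'+, `|h e| <= K%:C.

Lemma normc_real (r : R) : `|r%:C| = `|r|%:C.
Proof. by rewrite normc_def /= expr0n addr0 sqrtr_sqr. Qed.

Lemma gt0_complex_real (x : C) : 0 < x -> exists2 r : R, 0 < r & x = r%:C.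
Proof. by case: x => a b; rewrite ltcE /= => /andP[/eqP -> ?]; exists a. Qed.

Lemma near0_linear_lt (K : R) {r : R} : 0 < r -> \forall e \near (0 : R)^'+, K * e < r.
Proof.
move=> r0; have Kr0 : 0 < r / (`|K| + 1) by rewrite divr_gt0 // ltr_wpDl.
apply: filterS2 (nbhs_right_gt 0) (nbhs_right_lt Kr0) => e e0 eKr.
have : (`|K| + 1) * e < r by rewrite -ltr_pdivlMl ?ltr_wpDl // mulrC.
have := ler_norm K; nra.
Qed.

Lemma bigO_eps_le {h1 h2} :
  (\forall e \near (0 : R)^'+, `|h1 e| <= `|h2 e|) -> bigO_eps h2 -> bigO_eps h1.
Proof. by move=> h12 [K hK]; exists K; apply: filterS2 h12 hK => e; apply: le_trans. Qed.

Lemma bigO_eps_eq {h1 h2} :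
  (\forall e \near (0 : R)^'+, h1 e = h2 e) -> bigO_eps h2 -> bigO_eps h1.
Proof. by move=> h12; apply: bigO_eps_le; apply: filterS h12 => e ->. Qed.

Lemma bigO_eps0 : bigO_eps (fun=> 0).
Proof. by exists 0; apply: filterE => e; rewrite normr0 mul0r. Qed.

Lemma bigO_epsD {h1 h2} : bigO_eps h1 -> bigO_eps h2 -> bigO_eps (fun e => h1 e + h2 e).
Proof.
move=> [K1 hK1] [K2 hK2]; exists (K1 + K2); apply: filterS2 hK1 hK2 => e h1e h2e.
by rewrite mulrDl rmorphD (le_trans (ler_normD _ _)) // lerD.
Qed.

Lemma bigO_epsN {h} : bigO_eps h -> bigO_eps (fun e => - h e).
Proof. by apply: bigO_eps_le; apply: filterE => e; rewrite normrN. Qed.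

Lemma bigO_epsB {h1 h2} : bigO_eps h1 -> bigO_eps h2 -> bigO_eps (fun e => h1 e - h2 e).
Proof. by move=> O1 O2; exact: (bigO_epsD O1 (bigO_epsN O2)). Qed.

Lemma bigO_epsJ {h} : bigO_eps h -> bigO_eps (fun e => conjc (h e)).
Proof. by apply: bigO_eps_le; apply: filterE => e; rewrite normcJ. Qed.

Lemma bigO_eps_sum (I : Type) (r : seq I) (P : pred I) (F : I -> R -> C) :
  (forall i, P i -> bigO_eps (F i)) -> bigO_eps (fun e => \sum_(i <- r | P i) F i e).
Proof.
move=> OF; elim: r => [|x r IH].
  by apply: bigO_eps_eq bigO_eps0; apply: filterE => e; rewrite big_nil.
have [Px|nPx] := boolP (P x).
  by apply: bigO_eps_eq (bigO_epsD (OF x Px) IH); apply: filterE => e; rewrite big_cons Px.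
by apply: bigO_eps_eq IH; apply: filterE => e; rewrite big_cons (negbTE nPx).
Qed.

Lemma bounded_eps_cst c : bounded_eps (fun=> c).
Proof. by exists (complex.Re `|c|); apply: filterE => e; rewrite RRe_real // normr_real. Qed.

Lemma bounded_epsD {h1 h2} : bounded_eps h1 -> bounded_eps h2 -> bounded_eps (fun e => h1 e + h2 e).
Proof.
move=> [K1 hK1] [K2 hK2]; exists (K1 + K2); apply: filterS2 hK1 hK2 => e h1e h2e.
by rewrite rmorphD (le_trans (ler_normD _ _)) // lerD.
Qed.

Lemma bounded_epsN {h} : bounded_eps h -> bounded_eps (fun e => - h e).
Proof. by move=> [K hK]; exists K; apply: filterS hK => e; rewrite normrN. Qed.

Lemma bounded_epsM {h1 h2} : bounded_eps h1 -> bounded_eps h2 -> bounded_eps (fun e => h1 e * h2 e).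
Proof.
move=> [K1 hK1] [K2 hK2]; exists (K1 * K2); apply: filterS2 hK1 hK2 => e h1e h2e.
by rewrite normrM rmorphM ler_pM.
Qed.

Lemma bounded_epsJ {h} : bounded_eps h -> bounded_eps (fun e => conjc (h e)).
Proof. by move=> [K hK]; exists K; apply: filterS hK => e; rewrite normcJ. Qed.

Lemma bounded_eps_sum (I : Type) (r : seq I) (P : pred I) (F : I -> R -> C) :
  (forall i, P i -> bounded_eps (F i)) ->
  bounded_eps (fun e => \sum_(i <- r | P i) F i e).
Proof.
move=> BF; elim: r => [|x r [K hK]].
  by exists 0; apply: filterE => e; rewrite big_nil normr0.
have [Px|nPx] := boolP (P x); last first.
  by exists K; apply: filterS hK => e; rewrite big_cons (negbTE nPx).
have [K' hK'] := bounded_epsD (BF x Px) (ex_intro _ K hK).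
by exists K'; apply: filterS hK' => e; rewrite big_cons Px.
Qed.

Lemma bigO_eps_bounded {h} : bigO_eps h -> bounded_eps h.
Proof.
move=> [K hK]; exists `|K|.
apply: filterS3 hK (nbhs_right_gt 0) (nbhs_right_lt (@ltr01 R)) => e hKe e0 e1.
apply: le_trans hKe _; rewrite lecR.
have := ler_norm K; have := normr_ge0 K; nra.
Qed.

Lemma bigO_epsMl {h1 h2} : bounded_eps h1 -> bigO_eps h2 -> bigO_eps (fun e => h1 e * h2 e).
Proof.
move=> [K1 hK1] [K2 hK2]; exists (K1 * `|K2|).
apply: filterS3 hK1 hK2 (nbhs_right_gt 0) => e h1e h2e e0.
rewrite normrM -mulrA rmorphM ler_pM //; apply: le_trans h2e _.
by rewrite lecR; apply: ler_wpM2r; [exact: ltW | exact: ler_norm].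
Qed.

Lemma bigO_epsMr {h1 h2} : bigO_eps h1 -> bounded_eps h2 -> bigO_eps (fun e => h1 e * h2 e).
Proof.
move=> O1 B2; apply: bigO_eps_eq (bigO_epsMl B2 O1).
by apply: filterE => e; rewrite /= mulrC.
Qed.

Lemma bounded_eps_id : bounded_eps (fun e : R => e%:C).
Proof.
exists 1; apply: filterS2 (nbhs_right_gt 0) (nbhs_right_lt (@ltr01 R)) => e e0 e1.
by rewrite normc_real gtr0_norm // lecR ltW.
Qed.

Lemma cvg_eventually_far {g : R -> C} {a b : C} : a != b -> g @ (0 : R)^'+ --> b ->
  exists2 r : R, 0 < r & \forall e \near (0 : R)^'+, r%:C <= `|a - g e|.
Proof.
move=> ab gb; have [d d0 dE] : exists2 d : R, 0 < d & `|a - b| = d%:C.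
  by apply: gt0_complex_real; rewrite normr_gt0 subr_eq0.
have d20 : 0 < d / 2 by rewrite divr_gt0.
exists (d / 2) => //.
have : \forall e \near (0 : R)^'+, `|b - g e| < (d / 2)%:C.
  by move/(@cvgrPdist_lt _ C^o): gb; apply; rewrite ltcR.
apply: filterS => e near_b; rewrite -(lerD2r `|b - g e|).
have d_le : d%:C <= `|a - g e| + `|b - g e| by rewrite -dE (distrC b) ler_distD.
apply: le_trans d_le; rewrite [X in _ <= X](_ : d%:C = (d / 2)%:C + (d / 2)%:C).
  by rewrite lerD2l ltW.
by rewrite -rmorphD; congr _%:C; field.
Qed.

Lemma bounded_eps_inv {g : R -> C} {r : R} : 0 < r ->
  (\forall e \near (0 : R)^'+, r%:C <= `|g e|) -> bounded_eps (fun e => (g e)^-1).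
Proof.
move=> r0 far; exists r^-1; apply: filterS far => e far_e.
have ge0 : 0 < `|g e| by apply: lt_le_trans far_e; rewrite ltcR.
rewrite normfV -(ler_pM2l ge0) mulfV ?gt_eqF //.
apply: le_trans (_ : r%:C * r^-1%:C <= _); first by rewrite -rmorphM mulfV ?gt_eqF.
by rewrite ler_wpM2r // ler0c invr_ge0 ltW.
Qed.

Lemma bigO_eps_cvg0 {h} : bigO_eps h -> h @ (0 : R)^'+ --> (0 : C).
Proof.
move=> [K hK]; apply/(@cvgr0Pnorm_lt _ C^o) => _ /gt0_complex_real[r r0 ->].
apply: filterS2 hK (near0_linear_lt K r0) => e hKe Ker.
by apply: le_lt_trans hKe _; rewrite ltcR.
Qed.

Lemma bigO_eps_sqr_cvg0 {h} : bigO_eps (fun e => h e * conjc (h e)) -> h @ (0 : R)^'+ --> (0 : C).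
Proof.
move=> [K hK]; apply/(@cvgr0Pnorm_lt _ C^o) => _ /gt0_complex_real[r r0 ->].
have r20 : 0 < r ^+ 2 by rewrite exprn_gt0.
apply: filterS2 hK (near0_linear_lt K r20) => e hKe Ker.
rewrite -sqr_normc ger0_norm ?sqr_ge0 // in hKe.
rewrite -(ltr_pXn2r (_ : (0 < 2)%N)) ?inE ?normr_ge0 ?ler0c ?ltW //.
  by apply: le_lt_trans hKe _; rewrite -rmorphXn ltcR.
by rewrite qualifE /= ler0c ltW.
Qed.

End EpsAsymptotics.

Section SymmetricEigenbasis.
Context {R : rcfType}.

Lemma sym_distinct_eigs_orthonormal {n} {A : 'M[R]_n} : A^T = A -> distinct_eigs A ->
  exists (M : 'M[R]_n) (th : 'I_n -> R),
    [/\ injective th, M^T *m M = 1%:M & M *m A = diag_mx (\row_j th j) *m M].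
Proof.
move=> symA [th [th_inj th_eig]].
have /fin_all_exists [v v_eig] : forall j, exists v : 'rV[R]_n, v *m A = th j *: v /\ v != 0.
  by move=> j; have /eigenvalueP [v ? ?] := th_eig j; exists v.
have vvE j k : (v j *m (v k)^T) 0 0 = \sum_p v j 0 p * v k 0 p.
  by rewrite mxE; apply: eq_bigr => p _; rewrite mxE.
have v_orth j k : j != k -> \sum_p v j 0 p * v k 0 p = 0.
  move=> jk; rewrite -vvE.
  have e1 : v j *m A *m (v k)^T = th j *: (v j *m (v k)^T).
    by rewrite (proj1 (v_eig j)) scalemxAl.
  have e2 : v j *m A *m (v k)^T = th k *: (v j *m (v k)^T).
    by rewrite -mulmxA -{1}symA -trmx_mul (proj1 (v_eig k)) linearZ /= -scalemxAr.
  have : (th j - th k) *: (v j *m (v k)^T) = 0 by rewrite scalerBl -e1 -e2 subrr.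
  move/eqP; rewrite scaler_eq0 subr_eq0 (inj_eq th_inj) (negbTE jk) => /eqP ->.
  by rewrite mxE.
pose nv j := \sum_p v j 0 p ^+ 2.
have nv_gt0 j : 0 < nv j.
  rewrite lt_def sumr_ge0 ?andbT => [|p _]; last exact: sqr_ge0.
  apply/eqP => nv0; case/negP: (proj2 (v_eig j)); apply/eqP/rowP => p; rewrite mxE.
  have /eqP := @psumr_eq0P _ _ _ _ (fun p _ => sqr_ge0 (v j 0 p)) nv0 p isT.
  by rewrite sqrf_eq0 => /eqP.
pose M := \matrix_(j, p) ((Num.sqrt (nv j))^-1 * v j 0 p).
exists M, th; split => //.
  apply: mulmx1C; apply/matrixP => j k; rewrite !mxE.
  under eq_bigr do rewrite !mxE mulrACA.
  rewrite -mulr_sumr; have [<-|jk] := eqVneq j k; last by rewrite v_orth // mulr0.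
  by rewrite -invfM -expr2 sqr_sqrtr ?ltW // mulVf ?gt_eqF.
apply/matrixP => j p; rewrite mul_diag_mx !mxE.
under eq_bigr do rewrite mxE -mulrA.
rewrite -mulr_sumr.
have := congr1 (fun w : 'rV_n => w 0 p) (proj1 (v_eig j)); rewrite !mxE => ->.
by rewrite mulrCA.
Qed.

End SymmetricEigenbasis.

Lemma orthogonal_sum_coord_mul {K : comRingType} {n} {M : 'M[K]_n} :
  M^T *m M = 1%:M -> forall x y : 'I_n -> K,
  \sum_j (\sum_p M j p * x p) * (\sum_q M j q * y q) = \sum_p x p * y p.
Proof.
move=> orthM x y; pose col (z : 'I_n -> K) : 'cV[K]_n := \col_p z p.
have coordE z j : \sum_p M j p * z p = (M *m col z) j 0.
  by rewrite mxE; apply: eq_bigr => p _; rewrite mxE.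
transitivity (((M *m col x)^T *m (M *m col y)) 0 0).
  by rewrite mxE; apply: eq_bigr => j _; rewrite mxE -!coordE.
rewrite trmx_mul -mulmxA (mulmxA M^T) orthM mul1mx mxE.
by apply: eq_bigr => p _; rewrite !mxE.
Qed.

Section ComplexConj.
Context {R : rcfType}.

Lemma conjcD (x y : R[i]) : conjc (x + y) = conjc x + conjc y.
Proof. exact: rmorphD. Qed.

Lemma conjcM (x y : R[i]) : conjc (x * y) = conjc x * conjc y.
Proof. exact: rmorphM. Qed.

Lemma conjc_sum (I : Type) (r : seq I) (P : pred I) (F : I -> R[i]) :
  conjc (\sum_(i <- r | P i) F i) = \sum_(i <- r | P i) conjc (F i).
Proof. exact: rmorph_sum. Qed.

Lemma sesq_bilin_sqr_expand n (a b : 'I_n -> R[i]) :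
  (\sum_j a j * conjc (b j)) * conjc (\sum_k a k * conjc (b k)) =
  (\sum_j a j * b j) * conjc (\sum_k a k * b k) +
  \sum_j \sum_k a j * conjc (a k) * (conjc (b j) * b k - b j * conjc (b k)).
Proof.
rewrite !conjc_sum !mulr_suml -big_split /=; apply: eq_bigr => j _.
rewrite !mulr_sumr -big_split /=; apply: eq_bigr => k _.
rewrite !conjcM conjcK; ring.
Qed.

End ComplexConj.

Section Expi.
Context {R : realType}.

Lemma expi_mulJ (x : R) : expi x * conjc (expi x) = 1.
Proof.
apply/eqP; rewrite eq_complex /= mulrN opprK -!expr2 cos2Dsin2 mulrN mulrC addNr.
by rewrite !eqxx.
Qed.

Lemma normr_expi (x : R) : `|expi x| = 1.
Proof. by rewrite normc_def /= cos2Dsin2 sqrtr1. Qed.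

End Expi.

Section Blocks.
Context {S N : nat} {L : 'I_S -> nat}.

Definition block_start (m : nat) := (\sum_(t < S | (t < m)%N) L t)%N.

Lemma block_start_succ {m} (mS : (m < S)%N) :
  block_start m.+1 = (block_start m + L (Ordinal mS))%N.
Proof.
rewrite /block_start (bigID (fun t : 'I_S => (t < m)%N)) /=; congr (_ + _)%N.
  by apply: eq_bigl => t; case: (ltnP t m) => h; rewrite ?andbT ?andbF //; lia.
rewrite (big_pred1 (Ordinal mS)) // => t /=.
by rewrite -val_eqE /= ltnS -leqNgt -eqn_leq.
Qed.

Lemma block_start_succ_ord (s : 'I_S) : block_start s.+1 = (Nstart L s + L s)%N.
Proof. by rewrite (block_start_succ (ltn_ord s)); congr (_ + L _)%N; apply: val_inj. Qed.

Lemma block_start_mono : {homo block_start : m n / (m <= n)%N}.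
Proof.
move=> m n mn; rewrite /block_start [X in (_ <= X)%N](bigID (fun t : 'I_S => (t < m)%N)) /=.
apply: leq_trans (leq_addr _ _); apply: eq_leq; apply: eq_bigl => t.
by case: (ltnP t m) => h; rewrite ?andbT ?andbF // (leq_trans h mn).
Qed.

Lemma block_start_S : block_start S = (\sum_(s < S) L s)%N.
Proof. by apply: eq_bigl => t; rewrite ltn_ord. Qed.

Lemma inB_uniq s t i : inB L s i -> inB L t i -> s = t.
Proof.
wlog st : s t / (s <= t)%N.
  by move=> W si ti; case: (leqP s t) => [st|/ltnW ts]; [apply: W | apply/esym/W].
rewrite /inB => /andP[_ i_lt] /andP[t_le _]; apply: val_inj; apply/eqP.
rewrite eqn_leq st /= leqNgt; apply/negP => lt_st.
have : (Nstart L s + L s <= Nstart L t)%N by rewrite -block_start_succ_ord block_start_mono.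
lia.
Qed.

Hypothesis sumL : (\sum_(s < S) L s)%N = N.

Lemma inB_cover {i} : (i < N)%N -> exists s, inB L s i.
Proof.
move=> iN.
have ex : exists m, (i < block_start m.+1)%N && (m < S)%N.
  have S0 : (0 < S)%N.
    rewrite lt0n; apply/eqP => S0; move: iN; rewrite -sumL big1 // => s _.
    by move: (ltn_ord s); rewrite {2}S0.
  by exists S.-1; rewrite prednK // block_start_S sumL iN /=; lia.
case: (ex_minnP ex) => m /andP[im mS] min_m.
exists (Ordinal mS); rewrite /inB -block_start_succ im andbT.
change (block_start m <= i)%N.
case: m im mS min_m => [|m] im mS min_m; first by rewrite /block_start big_pred0.
rewrite leqNgt; apply/negP => lt_i.
by have := min_m m; rewrite lt_i (ltnW mS) /= => /(_ isT); rewrite ltnn.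
Qed.

Lemma Nstart_add_le s : (Nstart L s + L s <= N)%N.
Proof. by rewrite -block_start_succ_ord -sumL -block_start_S block_start_mono. Qed.

Lemma block_idx_lt {s} (p : 'I_(L s)) : (Nstart L s + p < N)%N.
Proof. by apply: leq_trans (Nstart_add_le s); rewrite ltn_add2l. Qed.

Definition block_idx s (p : 'I_(L s)) : 'I_N := Ordinal (block_idx_lt p).

Lemma inB_block_idx {s} p : inB L s (block_idx s p).
Proof. by rewrite /inB /= leq_addr ltn_add2l ltn_ord. Qed.

Context {blk : 'I_N -> 'I_S}.
Hypothesis inB_blk : forall i, inB L (blk i) i.

Lemma blk_block_idx s p : blk (block_idx s p) = s.
Proof. exact: inB_uniq (inB_blk _) (inB_block_idx p). Qed.

Hypothesis L_gt0 : forall s, (0 < L s)%N.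

Lemma sum_block_split s (R : nmodType) (h : 'I_N -> R) :
  \sum_i h i = \sum_p h (block_idx s p) + \sum_(i | blk i != s) h i.
Proof.
rewrite (bigID (fun i => blk i == s)) /=; congr (_ + _).
have p0 : 'I_(L s) := Ordinal (L_gt0 s).
rewrite (reindex_onto (block_idx s) (fun i : 'I_N => insubd p0 (i - Nstart L s)%N)) /=.
  apply: eq_bigl => p; rewrite blk_block_idx eqxx /=; apply/eqP/val_inj.
  by rewrite val_insubd /= addKn ltn_ord.
move=> i /eqP bi; apply/val_inj; rewrite /= val_insubd.
have := inB_blk i; rewrite bi /inB => /andP[lo hi].
by rewrite ltn_subLR // hi /= subnKC.
Qed.

Lemma blockmxE (R : realType) (A : 'M[R]_N) s p q :
  blockmx L A s p q = A (block_idx s p) (block_idx s q).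
Proof.
have natmxE (i j : 'I_N) : natmx A i j = A i j by rewrite /natmx !valK.
by rewrite mxE; exact: (natmxE (block_idx s p) (block_idx s q)).
Qed.

End Blocks.

Lemma cdotE {R : realType} n (v w : 'cV[R[i]]_n) : cdot v w = \sum_j v j 0 * conjc (w j 0).
Proof. by []. Qed.

Section Perturbation.
Context {R : realType} {S N : nat} {L : 'I_S -> nat} {Wd : 'M[R]_N} {k : nat}
  {beta : 'I_S -> R} {gamma : R} {f : R -> 'I_N -> 'cV[R[i]]_N}
  {lambda : R -> 'I_N -> R[i]}.
Local Notation C := R[i].
Local Notation phase s := (expi (- 2 * pi * k%:R * beta s)).
Let F e l i : C := f e l i 0.

Hypotheses (L_bw : bandwidth N L) (Wd_adm : admissible L Wd) (gamma_gt0 : 0 < gamma).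
Hypothesis eigvec : forall eps, 0 < eps < gamma ->
  [/\ injective (lambda eps),
      (forall l, Pmx L k beta Wd eps *m f eps l = lambda eps l *: f eps l) &
      (forall l, cdot (f eps l) (f eps l) = 1)].
Context {blk : 'I_N -> 'I_S}.
Hypothesis inB_blk : forall i, inB L (blk i) i.

Local Notation sumL := (proj2 L_bw).
Local Notation idx := (block_idx sumL).
Local Notation blk_idx := (blk_block_idx sumL inB_blk).
Local Notation split_at := (sum_block_split sumL inB_blk (proj1 L_bw)).

Definition Weps_act (e : R) (x : 'I_N -> C) i := x i + e%:C * \sum_j (Wd i j)%:C * x j.

Lemma near_range : \forall e \near (0 : R)^'+, 0 < e < gamma.
Proof.
by apply: filterS2 (nbhs_right_gt 0) (nbhs_right_lt gamma_gt0) => e -> ->.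
Qed.

Lemma Wd_sym i j : Wd i j = Wd j i.
Proof. by case: Wd_adm => /matrixP /(_ j i); rewrite mxE. Qed.

Lemma blockmx_sym s : (blockmx L Wd s)^T = blockmx L Wd s.
Proof. by apply/matrixP => p q; rewrite mxE !(blockmxE sumL) Wd_sym. Qed.

Lemma Weps_act_sym e (x y : 'I_N -> C) :
  \sum_i Weps_act e x i * y i = \sum_i x i * Weps_act e y i.
Proof.
rewrite /Weps_act.
under eq_bigr do rewrite mulrDl.
under [in RHS]eq_bigr do rewrite mulrDr.
rewrite !big_split /=; congr (_ + _).
under eq_bigr do rewrite -mulrA mulr_suml.
under [in RHS]eq_bigr do rewrite mulrCA mulr_sumr.
rewrite -!mulr_sumr exchange_big /=; congr (_ * _).
by apply: eq_bigr => i _; apply: eq_bigr => j _; rewrite Wd_sym mulrCA mulrA.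
Qed.

Lemma Weps_act_conj e (y : 'I_N -> C) i :
  conjc (Weps_act e y i) = Weps_act e (fun j => conjc (y j)) i.
Proof.
rewrite /Weps_act conjcD conjcM conjc_sum conjc_real.
by congr (_ + _ * _); apply: eq_bigr => j _; rewrite conjcM conjc_real.
Qed.

Lemma Weps_mulE e (x : 'I_N -> C) i : \sum_j Weps Wd e i j * x j = Weps_act e x i.
Proof.
rewrite /Weps_act /Weps.
under eq_bigr do rewrite !mxE mulrDl.
rewrite big_split /= (bigD1 i) //= eqxx mul1r big1 ?addr0; last first.
  by move=> j /negbTE; rewrite eq_sym => ->; rewrite mul0r.
by congr (_ + _); rewrite mulr_sumr; apply: eq_bigr => j _; rewrite mulrA.
Qed.

Lemma Dmx_blk (i : 'I_N) : \sum_(s < S | inB L s i) phase s = phase (blk i).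
Proof.
rewrite (big_pred1 (blk i)) // => s.
by apply/idP/eqP => [/inB_uniq/(_ (inB_blk i))|->].
Qed.

Lemma eigen_eq_entry {e} l i : 0 < e < gamma ->
  phase (blk i) * Weps_act e (F e l) i = lambda e l * F e l i.
Proof.
move=> He; have [_ eig _] := eigvec e He.
have := congr1 (fun v : 'cV_N => v i 0) (eig l).
rewrite /Pmx -mulmxA /Dmx mul_diag_mx mxE [in X in X = _ -> _]mxE Dmx_blk.
by rewrite [in X in _ = X -> _]mxE [in X in X = _ -> _]mxE Weps_mulE.
Qed.

Lemma norm_eigvec_le1 {e} l i : 0 < e < gamma -> `|F e l i| <= 1.
Proof.
move=> He; have [_ _ /(_ l)] := eigvec e He; rewrite cdotE => unit.
rewrite -(expr_le1 (_ : 0 < 2)%N) // sqr_normc -unit (bigD1 i) //= lerDl.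
by apply: sumr_ge0 => j _; exact: mulcJ_ge0.
Qed.

Lemma bounded_eigvec l i : bounded_eps (fun e => F e l i).
Proof. by exists 1; apply: filterS near_range => e; apply: norm_eigvec_le1. Qed.

Lemma bounded_Weps_act l i : bounded_eps (fun e => Weps_act e (F e l) i).
Proof.
apply: bounded_epsD (bounded_eigvec l i) (bounded_epsM bounded_eps_id _).
by apply: bounded_eps_sum => j _; apply: bounded_epsM (bounded_eps_cst _) (bounded_eigvec l j).
Qed.

Lemma eigvec_orthogonal_k0 {e l m} : k = 0%N -> l != m -> 0 < e < gamma ->
  cdot (f e l) (f e m) = 0.
Proof.
move=> k0 lm He; have [lam_inj _ unit] := eigvec e He.
have Weps_eig l' i : Weps_act e (F e l') i = lambda e l' * F e l' i.
  by rewrite -eigen_eq_entry // k0 mulr0 mul0r /expi cos0 sin0 mul1r.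
have self_adj l' m' : lambda e l' * cdot (f e l') (f e m') =
    conjc (lambda e m') * cdot (f e l') (f e m').
  rewrite !cdotE !mulr_sumr.
  transitivity (\sum_i Weps_act e (F e l') i * conjc (F e m' i)).
    by apply: eq_bigr => i _; rewrite Weps_eig mulrA.
  rewrite Weps_act_sym; apply: eq_bigr => i _.
  by rewrite -Weps_act_conj Weps_eig conjcM /F; ring.
have := self_adj m m; rewrite unit !mulr1 => real_lam.
have /eqP := self_adj l m; rewrite -real_lam -subr_eq0 -mulrBl mulf_eq0 subr_eq0.
by rewrite (inj_eq lam_inj) (negbTE lm) => /eqP.
Qed.

Lemma eigvec_cdot_cvg0_k0 {l m} : k = 0%N -> l != m ->
  (fun e => cdot (f e l) (f e m)) @ (0 : R)^'+ --> (0 : C).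
Proof.
move=> k0 lm; apply: bigO_eps_cvg0; apply: bigO_eps_eq bigO_eps0.
by apply: filterS near_range => e; apply: eigvec_orthogonal_k0.
Qed.

Lemma eigvec_bilinear_zero {e l m} : l != m -> 0 < e < gamma ->
  \sum_i F e l i * Weps_act e (F e m) i = 0.
Proof.
move=> lm He; have [lam_inj _ _] := eigvec e He.
have : lambda e l * \sum_i F e l i * Weps_act e (F e m) i =
       lambda e m * \sum_i F e l i * Weps_act e (F e m) i.
  (* both sides equal (W f_l)^T D (W f_m), by symmetry of W_eps *)
  rewrite mulr_sumr.
  transitivity (\sum_i Weps_act e (F e l) i * (phase (blk i) * Weps_act e (F e m) i)).
    by apply: eq_bigr => i _; rewrite mulrA -(eigen_eq_entry l i He); ring.
  under eq_bigr do rewrite (eigen_eq_entry m _ He).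
  by rewrite -Weps_act_sym mulr_sumr; apply: eq_bigr => i _; ring.
move/eqP; rewrite -subr_eq0 -mulrBl mulf_eq0 subr_eq0 (inj_eq lam_inj) (negbTE lm) /=.
by move/eqP.
Qed.

Hypotheses (k_neq0 : k != 0%N) (beta_Gamma : Gamma beta).
Hypothesis lambda_lim : forall (s : 'I_S) (l : 'I_N), inB L s l ->
  lambda^~ l @ (0 : R)^'+ --> phase s.

Lemma lambda_cvg_phase l : lambda^~ l @ (0 : R)^'+ --> phase (blk l).
Proof. exact: lambda_lim (inB_blk l). Qed.

Lemma phase_inj {s t} : s != t -> phase s != phase t.
Proof.
by move=> st; have := @beta_Gamma k k_neq0 s t st; rewrite -!pmulrn.
Qed.

Lemma eigvec_off_block_bigO {l i} : blk i != blk l -> bigO_eps (fun e => F e l i).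
Proof.
move=> bil.
have [r r0 far] := cvg_eventually_far (phase_inj bil) (lambda_cvg_phase l).
pose K := \sum_j `|Wd i j|.
exists (K / r); apply: filterS2 far near_range => e far_e He.
have e0 : 0 < e by case/andP: He.
set w := \sum_j (Wd i j)%:C * F e l j.
have w_le : `|w| <= K%:C.
  rewrite /K rmorph_sum; apply: le_trans (ler_norm_sum _ _ _) _.
  apply: ler_sum => j _; rewrite normrM normc_real -[X in _ <= X]mulr1 ler_wpM2l //.
    by rewrite ler0c.
  exact: norm_eigvec_le1.
have shifted : (phase (blk i) - lambda e l) * F e l i = - (phase (blk i) * e%:C * w).
  by rewrite mulrBl -(eigen_eq_entry l i He) /Weps_act -/w; ring.
have key : r%:C * `|F e l i| <= (e * K)%:C.
  apply: le_trans (_ : `|phase (blk i) - lambda e l| * `|F e l i| <= _).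
    by rewrite ler_wpM2r.
  rewrite -normrM shifted normrN !normrM normr_expi mul1r normc_real (gtr0_norm e0).
  by rewrite rmorphM ler_wpM2l // ler0c ltW.
rewrite -(ler_pM2l (_ : 0 < r%:C)) ?ltcR //; apply: le_trans key _.
by rewrite -rmorphM lecR (_ : r * (K / r * e) = e * K) //; field; rewrite gt_eqF.
Qed.

Lemma eigvec_cross_block_bigO {l m} : blk l != blk m ->
  bigO_eps (fun e => cdot (f e l) (f e m)).
Proof.
move=> blm; apply: (bigO_eps_eq (h2 := fun e => \sum_i F e l i * conjc (F e m i))).
  by apply: filterE => e; rewrite cdotE.
apply: bigO_eps_sum => i _.
have [bil|bil] := eqVneq (blk i) (blk l).
  have bim : blk i != blk m by rewrite bil.
  exact: bigO_epsMl (bounded_eigvec l i) (bigO_epsJ (eigvec_off_block_bigO bim)).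
exact: bigO_epsMr (eigvec_off_block_bigO bil) (bounded_epsJ (bounded_eigvec m i)).
Qed.

Lemma lambda_eventually_large l :
  exists2 r : R, 0 < r & \forall e \near (0 : R)^'+, r%:C <= `|lambda e l|.
Proof.
have phase_neq0 : 0 != phase (blk l).
  by rewrite eq_sym -normr_eq0 normr_expi oner_neq0.
have [r r0 far] := cvg_eventually_far phase_neq0 (lambda_cvg_phase l).
by exists r => //; apply: filterS far => e; rewrite sub0r normrN.
Qed.

Section SameBlock.
Context {s : 'I_S} {M : 'M[R]_(L s)} {th : 'I_(L s) -> R}.
Hypotheses (th_inj : injective th) (M_orth : M^T *m M = 1%:M)
  (M_eig : M *m blockmx L Wd s = diag_mx (\row_j th j) *m M).

Definition coord e l j := \sum_p (M j p)%:C * F e l (idx s p).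

Definition shift e l := (lambda e l * conjc (phase s) - 1) / e%:C.

Definition off_block e l p := \sum_(i | blk i != s) (Wd (idx s p) i)%:C * F e l i.

Definition block_cdot e l m := \sum_p F e l (idx s p) * conjc (F e m (idx s p)).

Lemma block_eigen_eq {e} l p : 0 < e < gamma ->
  \sum_q (blockmx L Wd s p q)%:C * F e l (idx s q) =
  shift e l * F e l (idx s p) - off_block e l p.
Proof.
move=> He; have e_neq0 : e%:C != 0 by case/andP: He => e0 _; rewrite gt_eqF // ltcR.
have := eigen_eq_entry l (idx s p) He; rewrite blk_idx /Weps_act.
set w := \sum_j (Wd _ j)%:C * _ => row_p.
have w_eq : w = shift e l * F e l (idx s p).
  have : F e l (idx s p) + e%:C * w = lambda e l * conjc (phase s) * F e l (idx s p).
    transitivity (conjc (phase s) * (phase s * (F e l (idx s p) + e%:C * w))).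
      by rewrite mulrA [conjc _ * _]mulrC expi_mulJ mul1r.
    by rewrite row_p; ring.
  move=> eq_w; have -> : w = (F e l (idx s p) + e%:C * w - F e l (idx s p)) / e%:C.
    by field.
  by rewrite eq_w /shift; field.
rewrite -w_eq /w (split_at s) /off_block addrK.
by apply: eq_bigr => q _; rewrite (blockmxE sumL).
Qed.

Lemma off_block_bigO {l} p : blk l = s -> bigO_eps (fun e => off_block e l p).
Proof.
move=> bl; apply: bigO_eps_sum => i bi; have bil : blk i != blk l by rewrite bl.
exact: bigO_epsMl (bounded_eps_cst _) (eigvec_off_block_bigO bil).
Qed.

Lemma bounded_coord l j : bounded_eps (fun e => coord e l j).
Proof.
apply: bounded_eps_sum => p _.
exact: bounded_epsM (bounded_eps_cst _) (bounded_eigvec _ _).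
Qed.

Lemma coord_shift_bigO {l} j : blk l = s ->
  bigO_eps (fun e => ((th j)%:C - shift e l) * coord e l j).
Proof.
move=> bl.
apply: (bigO_eps_eq (h2 := fun e => - \sum_p (M j p)%:C * off_block e l p)); last first.
  apply: bigO_epsN; apply: bigO_eps_sum => p _.
  exact: bigO_epsMl (bounded_eps_cst _) (off_block_bigO p bl).
apply: filterS near_range => e He.
have M_eig_j q : \sum_p M j p * blockmx L Wd s p q = th j * M j q.
  by have := congr1 (fun A : 'M[R]_(L s) => A j q) M_eig; rewrite mul_diag_mx !mxE.
pose MWu := \sum_p (M j p)%:C * \sum_q (blockmx L Wd s p q)%:C * F e l (idx s q).
have MWu_eig : MWu = (th j)%:C * coord e l j.
  rewrite /MWu; under eq_bigr do rewrite mulr_sumr.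
  rewrite exchange_big /= /coord mulr_sumr; apply: eq_bigr => q _.
  rewrite mulrA -rmorphM -M_eig_j rmorph_sum mulr_suml; apply: eq_bigr => p _.
  by rewrite rmorphM mulrA.
have MWu_shift : MWu = shift e l * coord e l j - \sum_p (M j p)%:C * off_block e l p.
  rewrite /MWu; under eq_bigr => p _ do rewrite (block_eigen_eq l p He) mulrBr.
  by rewrite sumrB /coord mulr_sumr; congr (_ - _); apply: eq_bigr => p _; ring.
by rewrite mulrBl -MWu_eig MWu_shift; ring.
Qed.

Lemma coord_mixed_bigO {l j j'} : blk l = s -> j != j' ->
  bigO_eps (fun e => coord e l j * conjc (coord e l j')).
Proof.
move=> bl jj'.
have th_neq : (th j)%:C - (th j')%:C != 0.
  by rewrite subr_eq0; apply: contra jj' => /eqP/complexI/th_inj ->.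
pose rho e j := ((th j)%:C - shift e l) * coord e l j.
pose dth := ((th j)%:C - (th j')%:C)^-1.
(* the unknown shift cancels, and both rho's are O(eps) *)
have prodE e : coord e l j * coord e l j' =
    dth * (rho e j * coord e l j' - rho e j' * coord e l j).
  by rewrite /dth /rho; field.
apply: (bigO_eps_le (h2 := fun e => dth * (rho e j * coord e l j' - rho e j' * coord e l j))).
  by apply: filterE => e; rewrite normrM normcJ -normrM prodE.
apply: bigO_epsMl (bounded_eps_cst _) (bigO_epsB _ _).
  exact: bigO_epsMr (coord_shift_bigO j bl) (bounded_coord l j').
exact: bigO_epsMr (coord_shift_bigO j' bl) (bounded_coord l j).
Qed.

Lemma orthogonal_coord_mul (x y : 'I_(L s) -> C) :
  \sum_j (\sum_p (M j p)%:C * x p) * (\sum_q (M j q)%:C * y q) = \sum_p x p * y p.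
Proof.
have MC_orth : (map_mx (real_complex R) M)^T *m map_mx (real_complex R) M = 1%:M.
  by rewrite matrix.map_trmx -map_mxM M_orth map_mx1.
rewrite -(orthogonal_sum_coord_mul MC_orth x y); apply: eq_bigr => j _.
by congr (_ * _); apply: eq_bigr => p _; rewrite mxE.
Qed.

Lemma block_cdot_coordE e l m :
  block_cdot e l m = \sum_j coord e l j * conjc (coord e m j).
Proof.
rewrite /block_cdot -orthogonal_coord_mul; apply: eq_bigr => j _; congr (_ * _).
by rewrite conjc_sum; apply: eq_bigr => p _; rewrite conjcM conjc_real.
Qed.

Lemma coord_bilin_bigO {l m} : l != m -> blk l = s ->
  bigO_eps (fun e => \sum_j coord e l j * coord e m j).
Proof.
move=> lm bl; have [r r0 lam_large] := lambda_eventually_large m.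
pose off e := \sum_(i | blk i != s) F e l i * Weps_act e (F e m) i.
apply: (bigO_eps_eq (h2 := fun e => - (phase s * (lambda e m)^-1) * off e)).
  apply: filterS2 near_range lam_large => e He lam_e.
  have lam_neq0 : lambda e m != 0.
    by rewrite -normr_gt0; apply: lt_le_trans lam_e; rewrite ltcR.
  have := eigvec_bilinear_zero lm He; rewrite (split_at s) -/(off e).
  have -> : \sum_p F e l (idx s p) * Weps_act e (F e m) (idx s p) =
      conjc (phase s) * lambda e m * \sum_p F e l (idx s p) * F e m (idx s p).
    rewrite mulr_sumr; apply: eq_bigr => p _.
    have := eigen_eq_entry m (idx s p) He; rewrite blk_idx => row_p.
    transitivity (F e l (idx s p) * (conjc (phase s) * (phase s * Weps_act e (F e m) (idx s p)))).
      by rewrite (mulrA (conjc _)) (mulrC (conjc _)) expi_mulJ mul1r.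
    by rewrite row_p; ring.
  move=> /eqP; rewrite addr_eq0 => /eqP block_eq.
  rewrite orthogonal_coord_mul -[off e]opprK -block_eq.
  transitivity (phase s * conjc (phase s) * (lambda e m * (lambda e m)^-1) *
                \sum_p F e l (idx s p) * F e m (idx s p)).
    by rewrite expi_mulJ mulfV // !mul1r.
  by ring.
apply: bigO_epsMl.
  exact: bounded_epsN (bounded_epsM (bounded_eps_cst _) (bounded_eps_inv r0 lam_large)).
apply: bigO_eps_sum => i bi; have bil : blk i != blk l by rewrite bl.
exact: bigO_epsMr (eigvec_off_block_bigO bil) (bounded_Weps_act m i).
Qed.

Lemma block_cdot_sqr_bigO {l m} : l != m -> blk l = s ->
  bigO_eps (fun e => block_cdot e l m * conjc (block_cdot e l m)).
Proof.
move=> lm bl.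
apply: (bigO_eps_eq (h2 := fun e =>
    (\sum_j coord e l j * coord e m j) * conjc (\sum_j coord e l j * coord e m j) +
    \sum_j \sum_j' coord e l j * conjc (coord e l j') *
      (conjc (coord e m j) * coord e m j' - coord e m j * conjc (coord e m j')))).
  by apply: filterE => e; rewrite block_cdot_coordE sesq_bilin_sqr_expand.
apply: bigO_epsD.
  apply: (bigO_epsMr (coord_bilin_bigO lm bl)); apply: bounded_epsJ.
  by apply: bounded_eps_sum => j _; apply: bounded_epsM; apply: bounded_coord.
apply: bigO_eps_sum => j _; apply: bigO_eps_sum => j' _.
have [<-|jj'] := eqVneq j j'.
  apply: bigO_eps_eq bigO_eps0; apply: filterE => e.
  by rewrite [coord e m j * _]mulrC subrr mulr0.
apply: bigO_epsMr (coord_mixed_bigO bl jj') _.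
exact: bounded_epsD (bounded_epsM (bounded_epsJ (bounded_coord m j)) (bounded_coord m j'))
  (bounded_epsN (bounded_epsM (bounded_coord m j) (bounded_epsJ (bounded_coord m j')))).
Qed.

Lemma same_block_cdot_sqr_bigO {l m} : l != m -> blk l = s -> blk m = s ->
  bigO_eps (fun e => cdot (f e l) (f e m) * conjc (cdot (f e l) (f e m))).
Proof.
move=> lm bl bm.
pose off e := \sum_(i | blk i != s) F e l i * conjc (F e m i).
have off_bigO : bigO_eps off.
  apply: bigO_eps_sum => i bi; have bil : blk i != blk l by rewrite bl.
  exact: bigO_epsMr (eigvec_off_block_bigO bil) (bounded_epsJ (bounded_eigvec m i)).
have block_bnd : bounded_eps (fun e => block_cdot e l m).
  apply: bounded_eps_sum => p _.
  exact: bounded_epsM (bounded_eigvec _ _) (bounded_epsJ (bounded_eigvec _ _)).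
apply: (bigO_eps_eq (h2 := fun e => block_cdot e l m * conjc (block_cdot e l m) +
    (block_cdot e l m * conjc (off e) + off e * conjc (block_cdot e l m + off e)))).
  apply: filterE => e.
  have -> : cdot (f e l) (f e m) = block_cdot e l m + off e by rewrite cdotE (split_at s).
  by rewrite !conjcD; ring.
apply: bigO_epsD (block_cdot_sqr_bigO lm bl) (bigO_epsD _ _).
  exact: bigO_epsMl block_bnd (bigO_epsJ off_bigO).
exact: bigO_epsMr off_bigO (bounded_epsJ (bounded_epsD block_bnd (bigO_eps_bounded off_bigO))).
Qed.

End SameBlock.

Lemma eigvec_same_block_cdot_cvg0 {l m} : l != m -> blk l = blk m ->
  (fun e => cdot (f e l) (f e m)) @ (0 : R)^'+ --> (0 : C).
Proof.
move=> lm blm; have [_ _ _ _ /(_ (blk l)) blk_eigs] := Wd_adm.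
have [M [th [th_inj M_orth M_eig]]] :=
  sym_distinct_eigs_orthonormal (blockmx_sym (blk l)) blk_eigs.
exact/bigO_eps_sqr_cvg0/(same_block_cdot_sqr_bigO th_inj M_orth M_eig lm erefl (esym blm)).
Qed.

Lemma eigvec_cdot_cvg0 {l m} : l != m ->
  (fun e => cdot (f e l) (f e m)) @ (0 : R)^'+ --> (0 : C).
Proof.
move=> lm; have [blm|blm] := eqVneq (blk l) (blk m).
  exact: eigvec_same_block_cdot_cvg0.
exact/bigO_eps_cvg0/eigvec_cross_block_bigO.
Qed.

End Perturbation.

Local Close Scope complex_scope.

Theorem lemma4p4 (R : realType) (S N : nat) (L : 'I_S -> nat) (Wd : 'M[R]_N)
  (k : nat) (beta : 'I_S -> R) (gamma : R)
  (f : R -> 'I_N -> 'cV[R[i]]_N) (lambda : R -> 'I_N -> R[i]) :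
  (1 < S)%N -> (S <= N)%N ->
  bandwidth N L ->
  admissible L Wd ->
  Gamma beta ->
  0 < gamma ->
  (forall eps, 0 < eps < gamma -> distinct_eigs (Pmx L k beta Wd eps)) ->
  (forall eps, 0 < eps < gamma ->
     [/\ injective (lambda eps),
         (forall l, Pmx L k beta Wd eps *m f eps l = lambda eps l *: f eps l) &
         (forall l, cdot (f eps l) (f eps l) = 1)]) ->
  (forall (s : 'I_S) (l : 'I_N), inB L s l ->
     lambda^~ l @ 0^'+ --> expi (- 2 * pi * k%:R * beta s)) ->
  forall l m : 'I_N, l != m ->
    (fun eps => cdot (f eps l) (f eps m)) @ 0^'+ --> (0 : R[i]).
Proof.
move=> _ _ L_bw Wd_adm beta_Gamma gamma_gt0 _ eigvec lambda_lim l m lm.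
have /fin_all_exists [blk inB_blk] : forall i : 'I_N, exists s, inB L s i.
  by move=> i; exact: (inB_cover (proj2 L_bw) (ltn_ord i)).
have [k0|k_neq0] := eqVneq k 0%N.
  exact: (eigvec_cdot_cvg0_k0 Wd_adm gamma_gt0 eigvec inB_blk k0 lm).
exact: (eigvec_cdot_cvg0 L_bw Wd_adm gamma_gt0 eigvec inB_blk k_neq0 beta_Gamma lambda_lim lm).
Qed.
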